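(* Let $H$ be a separable real Hilbert space with complete orthonormal system $(e_k)_{k\ge1}$, $F\subset H$ compact, $\mu$ a probability measure on $F$, and $d,n\in\mathbb{N}$ with $\mathbf{M}_{d,n}(\mu)$ nonsingular. Then for every $h\in H$ and $\delta>0$ such that $\min_{f\in F}|\pi_n(f-h)|\ge\delta$, \[p^\mu_{d,n}(h)\ \ge\ 2^{\frac{\delta}{\delta+\operatorname{diam}F}\,d-3},\] where $\operatorname{diam}F=\max_{f_1,f_2\in F}|f_1-f_2|$.
   Context: $|\cdot|$ is the norm of $H$ and $\pi_n(f)=\sum_{k=1}^n\langle f,e_k\rangle e_k$. $c_0(\mathbb{N})$ is the set of sequences of nonnegative integers with finitely many nonzero entries; for $a\in c_0(\mathbb{N})$, $f^a:=\prod_k\langle f,e_k\rangle^{a_k}$. A polynomial on $H$ is a finite linear combination $p(f)=\sum_a p_a f^a$; its algebraic degree is $\max\{\sum_k a_k: p_a\neq0\}$ and its harmonic degree is $\max\{k: a_k\neq0\text{ for some } a\text{ with } p_a\neq0\}$. $P_{d,n}$ is the space of polynomials of algebraic degree at most $d$ and harmonic degree at most $n$. $\boldsymbol{v}_{d,n}(\cdot)$ is a vector whose entries form a basis of $P_{d,n}$; $\mathbf{M}_{d,n}(\mu)=\int_F \boldsymbol{v}_{d,n}(f)\boldsymbol{v}_{d,n}(f)^T\,d\mu(f)$; the Christoffel–Darboux polynomial is $p^\mu_{d,n}(f)=\boldsymbol{v}_{d,n}(f)^T\mathbf{M}_{d,n}(\mu)^{-1}\boldsymbol{v}_{d,n}(f)$.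 *)

From HB Require Import structures.
From mathcomp Require Import all_boot all_order all_algebra.
From mathcomp Require Import all_classical all_reals all_analysis.
Set Implicit Arguments. Unset Strict Implicit. Unset Printing Implicit Defensive.
Import Order.TTheory GRing.Theory Num.Theory.
Import numFieldNormedType.Exports.
Local Open Scope classical_set_scope.
Local Open Scope ring_scope.

Section Defs.
Variables (R : realType) (H : normedModType R).

Definition inner_product_of_norm (inner : H -> H -> R) : Prop :=
  [/\ (forall x y, inner x y = inner y x),
      (forall (a : R) x y z, inner (a *: x + y) z = a * inner x z + inner y z) &
      (forall x, inner x x = `|x| ^+ 2)].

(* (e k)_{k : nat} is a complete orthonormal system.  NB: indexed from 0,
   i.e. e k here is e_{k+1} of the paper. *)
Definition complete_orthonormal_system (inner : H -> H -> R) (e : nat -> H) : Prop :=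
  (forall i j, inner (e i) (e j) = (i == j)%:R) /\
  (forall f, (forall k, inner f (e k) = 0) -> f = 0).

Definition proj_n (inner : H -> H -> R) (e : nat -> H) (n : nat) (f : H) : H :=
  \sum_(k < n) inner f (e k) *: e k.

(* diam F = max_{f1,f2 in F} |f1 - f2| (a max when F is compact nonempty) *)
Definition diam (F : set H) : R :=
  sup [set `|f1 - f2| | f1 in F & f2 in F].

Definition borelH := g_sigma_algebraType (@open H).

End Defs.

(* multi-indices a with support in {1..n} and |a| <= d : these index the
   monomial basis of P_{d,n} *)
Definition multi_index (d n : nat) :=
  {a : {ffun 'I_n -> 'I_d.+1} | (\sum_(i < n) (a i : nat) <= d)%N}.

Section Poly.
Variables (R : realType) (H : normedModType R).
Variables (inner : H -> H -> R) (e : nat -> H) (d n : nat).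

Definition monomial (a : multi_index d n) (f : H) : R :=
  \prod_(i < n) inner f (e i) ^+ (val a i : nat).

Definition Nbasis := #|{: multi_index d n}|.

Definition vdn (f : H) : 'cV[R]_Nbasis :=
  \col_(i < Nbasis) monomial (enum_val i) f.

Definition moment_matrix (mu : {measure set (borelH H) -> \bar R}) (F : set H) : 'M[R]_Nbasis :=
  \matrix_(i < Nbasis, j < Nbasis)
     Rintegral mu (F : set (borelH H)) (fun f : borelH H => vdn f i 0 * vdn f j 0).

Definition christoffel_darboux (mu : {measure set (borelH H) -> \bar R}) (F : set H) (h : H) : R :=
  ((vdn h)^T *m invmx (moment_matrix mu F) *m vdn h) 0 0.

End Poly.

From HB Require Import structures.
From mathcomp Require Import all_boot all_order all_algebra.
From mathcomp Require Import all_classical all_reals all_analysis.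
From mathcomp Require Import ring lra zify.
From mathcomp Require Import measurable_realfun.
Import Order.TTheory GRing.Theory Num.Theory.
Import numFieldNormedType.Exports.
Local Open Scope classical_set_scope.
Local Open Scope ring_scope.
Set Implicit Arguments. Unset Strict Implicit. Unset Printing Implicit Defensive.

(* The Christoffel-Darboux polynomial is extremal: q(h)^2 <= p(h) for every
   q in P_{d,n} with |q| <= 1 on F, by Cauchy-Schwarz for the moment form
   (x, y) |-> x^T M y = int q_x q_y dmu.  Let m = min_F |pi_n(f - h)| >= delta
   and M = m + diam F, so that g(f) = |pi_n(f - h)|^2 is a quadratic polynomial
   with g(h) = 0 and m^2 <= g <= M^2 on F.  Composing the Chebyshev polynomial
   T_k, k = floor(d/2), with the affine map sending [m^2, M^2] onto [-1, 1]
   gives q bounded by 1 on F with q(h) = (rho^k + rho^-k)/2, where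
   rho = (M + m)/(M - m) >= 2^(m/M) and m/M >= delta/(delta + diam F).
   If diam F = 0, then g - m^2 vanishes on F but not at h, which the
   nonsingularity of M_{d,n}(mu) forbids; if d <= 1, then p(h) >= 1 suffices. *)

Section InnerProduct.
Variables (R : realType) (H : normedModType R) (inner : H -> H -> R).
Hypothesis inner_norm : inner_product_of_norm inner.

Lemma innerC x y : inner x y = inner y x.
Proof. by case: inner_norm. Qed.

Lemma innerxx x : inner x x = `|x| ^+ 2.
Proof. by case: inner_norm. Qed.

Lemma innerDl x y z : inner (x + y) z = inner x z + inner y z.
Proof. by case: inner_norm => _ lin _; rewrite -[x]scale1r lin mul1r scale1r. Qed.

Lemma innerZl a x z : inner (a *: x) z = a * inner x z.
Proof.
case: inner_norm => _ lin _.
have inner0l : inner 0 z = 0 by have := innerDl 0 0 z; rewrite addr0; lra.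
by rewrite -[a *: x]addr0 lin inner0l addr0.
Qed.

Lemma innerBl x y z : inner (x - y) z = inner x z - inner y z.
Proof. by rewrite innerDl -scaleN1r innerZl mulN1r. Qed.

Lemma innerDr x y z : inner z (x + y) = inner z x + inner z y.
Proof. by rewrite innerC innerDl !(innerC z). Qed.

Lemma innerBr x y z : inner z (x - y) = inner z x - inner z y.
Proof. by rewrite innerC innerBl !(innerC z). Qed.

Lemma inner_suml (I : Type) (s : seq I) (a : I -> R) (x : I -> H) y :
  inner (\sum_(i <- s) a i *: x i) y = \sum_(i <- s) a i * inner (x i) y.
Proof.
elim: s => [|i s IH]; last by rewrite !big_cons innerDl innerZl IH.
by rewrite !big_nil -[0 : H](scale0r 0) innerZl mul0r.
Qed.

Lemma inner_polar x y : inner x y = (`|x + y| ^+ 2 - `|x - y| ^+ 2) / 4.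
Proof.
by rewrite -!innerxx innerBl innerDl !innerBr !innerDr (innerC y x); field.
Qed.

Lemma continuous_innerl y : continuous (inner^~ y).
Proof.
have sqr_norm_cont (g : H -> H) : continuous g -> continuous (fun x => `|g x| ^+ 2).
  move=> cg; rewrite (_ : (fun x => _) = (fun r => r ^+ 2) \o (Num.norm \o g)) //.
  move=> x; apply: continuous_comp; last exact: exprn_continuous.
  by apply: continuous_comp; [exact: cg | exact: norm_continuous].
have cD : continuous (fun x : H => x + y).
  by move=> x; apply: continuousD; [exact: cvg_id | exact: cst_continuous].
have cB : continuous (fun x : H => x - y).
  by move=> x; apply: continuousB; [exact: cvg_id | exact: cst_continuous].
rewrite (_ : inner^~ y = ((fun x => `|x + y| ^+ 2) \- (fun x => `|x - y| ^+ 2)) \* cst 4^-1).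
  move=> x; apply: continuousM; last exact: cst_continuous.
  by apply: continuousB; [exact: (sqr_norm_cont _ cD x) | exact: (sqr_norm_cont _ cB x)].
by apply: funext => x; exact: inner_polar.
Qed.

End InnerProduct.

Section Projection.
Variables (R : realType) (H : normedModType R) (inner : H -> H -> R) (e : nat -> H).
Hypothesis inner_norm : inner_product_of_norm inner.
Hypothesis e_orthonormal : forall i j, inner (e i) (e j) = (i == j)%:R.
Variable n : nat.
Local Notation P := (proj_n inner e n).

Lemma proj_n_sqr_norm x : `|P x| ^+ 2 = \sum_(k < n) inner x (e k) ^+ 2.
Proof.
rewrite -(innerxx inner_norm) {1}/proj_n (inner_suml inner_norm).
apply: eq_bigr => k _; rewrite (innerC inner_norm (e k)) /proj_n (inner_suml inner_norm).
rewrite (bigD1 k) //= e_orthonormal eqxx mulr1 big1 ?addr0 ?expr2 // => j jk.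
by rewrite e_orthonormal (_ : (j : nat) == k = false) ?mulr0 //; exact: negPf.
Qed.

Lemma proj_n_norm_le x : `|P x| <= `|x|.
Proof.
rewrite -ler_sqr ?nnegrE // -subr_ge0.
have inner_P : inner x (P x) = \sum_(k < n) inner x (e k) ^+ 2.
  rewrite (innerC inner_norm) /proj_n (inner_suml inner_norm).
  by apply: eq_bigr => k _; rewrite (innerC inner_norm) expr2.
have := sqr_ge0 `|x - P x|; rewrite -(innerxx inner_norm) (innerBl inner_norm).
rewrite !(innerBr inner_norm) (innerC inner_norm (P x)) inner_P !(innerxx inner_norm).
by rewrite proj_n_sqr_norm; lra.
Qed.

Lemma proj_nB x y : P (x - y) = P x - P y.
Proof.
by rewrite /proj_n -sumrB; apply: eq_bigr => k _; rewrite (innerBl inner_norm) scalerBl.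
Qed.

End Projection.

Section Polynomials.
Variables (R : realType) (H : normedModType R) (inner : H -> H -> R) (e : nat -> H).
Variables (d n : nat).
Local Notation multi_index := (multi_index d n).
Local Notation monomial := (@monomial R H inner e d n).

Definition mdeg (a : multi_index) : nat := \sum_(i < n) (val a i : nat).

Lemma leq_sum_ord (g : 'I_n -> nat) i : (g i <= \sum_(j < n) g j)%N.
Proof. by rewrite (bigD1 i) //= leq_addr. Qed.

Lemma multi_index_of_subproof (g : 'I_n -> nat) : (\sum_(i < n) g i <= d)%N ->
  (\sum_(i < n) (([ffun i => inord (g i)] : {ffun 'I_n -> 'I_d.+1}) i : nat) <= d)%N.
Proof.
move=> le_g_d; rewrite (eq_bigr g) // => i _; rewrite ffunE inordK //.
by rewrite ltnS (leq_trans (leq_sum_ord g i)).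
Qed.

Definition multi_index_of (g : 'I_n -> nat) (le_g_d : (\sum_(i < n) g i <= d)%N)
  : multi_index := exist _ [ffun i => inord (g i)] (multi_index_of_subproof le_g_d).

Lemma multi_index_ofE g le_g_d i : (val (@multi_index_of g le_g_d) i : nat) = g i.
Proof. by rewrite /= ffunE inordK // ltnS (leq_trans (leq_sum_ord g i)). Qed.

Lemma mdeg_multi_index_of g le_g_d : mdeg (@multi_index_of g le_g_d) = \sum_(i < n) g i.
Proof. by apply: eq_bigr => i _; rewrite multi_index_ofE. Qed.

Lemma monomial_multi_index_of g le_g_d f :
  monomial (@multi_index_of g le_g_d) f = \prod_(i < n) inner f (e i) ^+ g i.
Proof. by apply: eq_bigr => i _; rewrite multi_index_ofE. Qed.

Lemma monomialM a b : (mdeg a + mdeg b <= d)%N ->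
  exists ab, mdeg ab = (mdeg a + mdeg b)%N /\ forall f, monomial a f * monomial b f = monomial ab f.
Proof.
move=> le_ab_d.
have le_g_d : (\sum_(i < n) ((val a i : nat) + val b i) <= d)%N by rewrite big_split.
exists (multi_index_of le_g_d); split; first by rewrite mdeg_multi_index_of big_split.
by move=> f; rewrite monomial_multi_index_of -big_split; apply: eq_bigr => i _; rewrite exprD.
Qed.

Definition is_poly (k : nat) (q : H -> R) := exists c : multi_index -> R,
  (forall a, c a != 0 -> (mdeg a <= k)%N) /\ forall f, q f = \sum_a c a * monomial a f.

Lemma is_poly_ext k q q' : is_poly k q -> q =1 q' -> is_poly k q'.
Proof. by move=> [c [c_deg qE]] qq'; exists c; split => // f; rewrite -qq'. Qed.

Lemma is_poly_leq k k' q : (k <= k')%N -> is_poly k q -> is_poly k' q.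
Proof. by move=> le_kk' [c [c_deg qE]]; exists c; split => // a /c_deg/leq_trans; apply. Qed.

Lemma is_poly0 k : is_poly k (fun=> 0).
Proof.
by exists (fun=> 0); split => [a|f]; rewrite ?eqxx // big1 // => a _; rewrite mul0r.
Qed.

Lemma is_polyD k q r : is_poly k q -> is_poly k r -> is_poly k (fun f => q f + r f).
Proof.
move=> [c [c_deg qE]] [c' [c'_deg rE]]; exists (fun a => c a + c' a); split.
  move=> a; have [/c_deg //|] := boolP (c a != 0).
  by rewrite negbK => /eqP ->; rewrite add0r => /c'_deg.
by move=> f; rewrite qE rE -big_split; apply: eq_bigr => a _; rewrite mulrDl.
Qed.

Lemma is_polyZ k r q : is_poly k q -> is_poly k (fun f => r * q f).
Proof.
move=> [c [c_deg qE]]; exists (fun a => r * c a); split.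
  by move=> a; rewrite mulf_eq0 negb_or => /andP[_ /c_deg].
by move=> f; rewrite qE mulr_sumr; apply: eq_bigr => a _; rewrite mulrA.
Qed.

Lemma is_poly_sum k (I : Type) (s : seq I) (q : I -> H -> R) :
  (forall i, is_poly k (q i)) -> is_poly k (fun f => \sum_(i <- s) q i f).
Proof.
move=> q_poly; elim: s => [|i s IH].
  by apply: is_poly_ext (is_poly0 k) _ => f; rewrite big_nil.
by apply: is_poly_ext (is_polyD (q_poly i) IH) _ => f; rewrite big_cons.
Qed.

Lemma is_poly_monomial a : is_poly (mdeg a) (monomial a).
Proof.
exists (fun b => (b == a)%:R); split => [b|f]; first by case: (b =P a) => [->|_]; rewrite ?eqxx.
by rewrite (bigD1 a) //= eqxx mul1r big1 ?addr0 // => b /negPf ->; rewrite mul0r.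
Qed.

Lemma is_polyM k l q r : (k + l <= d)%N -> is_poly k q -> is_poly l r ->
  is_poly (k + l) (fun f => q f * r f).
Proof.
move=> le_kl_d [c [c_deg qE]] [c' [c'_deg rE]].
have qrE f : q f * r f = \sum_a \sum_b c a * c' b * (monomial a f * monomial b f).
  by rewrite qE rE mulr_suml; apply: eq_bigr => a _; rewrite mulr_sumr;
     apply: eq_bigr => b _; ring.
apply: is_poly_ext (_ : is_poly _ (fun f => \sum_a \sum_b _)) (fun f => esym (qrE f)).
apply: is_poly_sum => a; apply: is_poly_sum => b.
have [ca0|/c_deg le_a_k] := eqVneq (c a) 0.
  by apply: is_poly_ext (is_poly0 _) _ => f; rewrite ca0 !mul0r.
have [cb0|/c'_deg le_b_l] := eqVneq (c' b) 0.
  by apply: is_poly_ext (is_poly0 _) _ => f; rewrite cb0 mulr0 mul0r.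
have le_ab : (mdeg a + mdeg b <= k + l)%N by exact: leq_add.
have [ab [mdeg_ab abE]] := monomialM (leq_trans le_ab le_kl_d).
apply: is_polyZ; apply: is_poly_ext (fun f => esym (abE f)).
by apply: is_poly_leq (is_poly_monomial ab); rewrite mdeg_ab.
Qed.

Lemma is_poly_cst r : is_poly 0 (fun=> r).
Proof.
have le_0_d : (\sum_(i < n) (fun=> 0%N) i <= d)%N by rewrite big1.
have := is_polyZ r (is_poly_monomial (multi_index_of le_0_d)).
rewrite mdeg_multi_index_of big1 // => /is_poly_ext; apply => f.
by rewrite monomial_multi_index_of big1 ?mulr1.
Qed.

Lemma is_poly_coord (i : 'I_n) : (1 <= d)%N -> is_poly 1 (fun f => inner f (e i)).
Proof.
move=> d_ge1; pose g (j : 'I_n) := nat_of_bool (j == i).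
have sum_g : (\sum_j g j = 1)%N by rewrite (bigD1 i) //= /g eqxx big1 // => j /negPf ->.
have le_g_d : (\sum_j g j <= d)%N by rewrite sum_g.
have := is_poly_monomial (multi_index_of le_g_d).
rewrite mdeg_multi_index_of sum_g => /is_poly_ext; apply => f.
rewrite monomial_multi_index_of (bigD1 i) //= /g eqxx expr1 big1 ?mulr1 // => j /negPf ->.
by rewrite expr0.
Qed.

End Polynomials.

Arguments is_poly_cst {R H inner e d n}.

Section Chebyshev.
Variable R : realType.

Fixpoint chebT (k : nat) (x : R) : R :=
  match k with 0 => 1 | 1 => x | (k'.+1 as k1).+1 => 2 * x * chebT k1 x - chebT k' x end.

(* [chebU k] is the Chebyshev polynomial of the second kind of index k - 1. *)
Fixpoint chebU (k : nat) (x : R) : R :=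
  match k with 0 => 0 | 1 => 1 | (k'.+1 as k1).+1 => 2 * x * chebU k1 x - chebU k' x end.

Lemma chebT_SS k x : chebT k.+2 x = 2 * x * chebT k.+1 x - chebT k x.
Proof. by []. Qed.

Lemma chebU_SS k x : chebU k.+2 x = 2 * x * chebU k.+1 x - chebU k x.
Proof. by []. Qed.

Lemma chebT_pell k x : chebT k x ^+ 2 - (x ^+ 2 - 1) * chebU k x ^+ 2 = 1.
Proof.
pose pell k := chebT k x ^+ 2 - (x ^+ 2 - 1) * chebU k x ^+ 2.
pose cross k := chebT k x * chebT k.+1 x - (x ^+ 2 - 1) * chebU k x * chebU k.+1 x.
suff [] : [/\ pell k = 1, cross k = x & pell k.+1 = 1] by [].
elim: k => [|k [pell_k cross_k pell_k1]]; first by split; rewrite /pell /cross /=; ring.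
have -> : cross k.+1 = 2 * x * pell k.+1 - cross k.
  by rewrite /cross /pell !chebT_SS !chebU_SS; ring.
have -> : pell k.+2 = 4 * x ^+ 2 * pell k.+1 - 4 * x * cross k + pell k.
  by rewrite /cross /pell !chebT_SS !chebU_SS; ring.
by rewrite pell_k pell_k1 cross_k; split => //; ring.
Qed.

Lemma sqr_chebT_le1 k x : -1 <= x <= 1 -> chebT k x ^+ 2 <= 1.
Proof.
move=> /andP[x_ge x_le]; have := chebT_pell k x.
have := sqr_ge0 (chebU k x); have : x ^+ 2 <= 1 by nra.
by nra.
Qed.

Lemma chebT_mid (r s : R) k : r * s = 1 -> chebT k ((r + s) / 2) = (r ^+ k + s ^+ k) / 2.
Proof.
move=> rs1; pose T k := chebT k ((r + s) / 2).
suff [] : T k = (r ^+ k + s ^+ k) / 2 /\ T k.+1 = (r ^+ k.+1 + s ^+ k.+1) / 2 by [].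
elim: k => [|k [Tk Tk1]]; first by rewrite /T /= !expr0 !expr1; split; lra.
split => //; rewrite /T chebT_SS -/(T k) -/(T k.+1) Tk Tk1 !exprS.
have -> : r * (r * r ^+ k) + s * (s * s ^+ k) =
  (r + s) * (r * r ^+ k + s * s ^+ k) - r * s * (r ^+ k + s ^+ k) by ring.
by rewrite rs1; lra.
Qed.

End Chebyshev.

Lemma is_poly_chebT (R : realType) (H : normedModType R) (inner : H -> H -> R)
    (e : nat -> H) (d n : nat) (phi : H -> R) j :
  is_poly inner e d n 2 phi -> (2 * j <= d)%N ->
  is_poly inner e d n (2 * j) (fun f => chebT j (phi f)).
Proof.
move=> phi_poly; elim/ltn_ind: j => -[|[|j]] IH le_2j_d; first exact: is_poly_cst.
  exact: is_poly_ext phi_poly _.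
have T1 : is_poly inner e d n (2 + 2 * j.+1) (fun f => 2 * phi f * chebT j.+1 (phi f)).
  by apply: is_polyM; [lia | exact: is_polyZ | apply: IH => //; lia].
have T0 : is_poly inner e d n (2 + 2 * j.+1) (fun f => -1 * chebT j (phi f)).
  by apply: is_polyZ; apply: is_poly_leq (IH j _ _); lia.
have -> : (2 * j.+2 = 2 + 2 * j.+1)%N by lia.
by apply: is_poly_ext (is_polyD T1 T0) _ => f; rewrite chebT_SS mulN1r.
Qed.

Section IntegralSum.
Context d (T : measurableType d) (R : realType) (mu : {measure set T -> \bar R}).
Variables (D : set T) (I : Type) (f : I -> T -> R).
Hypotheses (mD : measurable D) (f_int : forall i, mu.-integrable D (EFin \o f i)).

Lemma integrable_Rsum (s : seq I) : mu.-integrable D (EFin \o (fun x => \sum_(i <- s) f i x)).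
Proof.
apply: eq_integrable mD _ _ _ (integrable_sum mD s (fun i _ => f_int i)).
by move=> x _; rewrite /= sumEFin.
Qed.

Lemma Rintegral_sum (s : seq I) :
  Rintegral mu D (fun x => \sum_(i <- s) f i x) = \sum_(i <- s) Rintegral mu D (f i).
Proof.
elim: s => [|i r IH].
  by under eq_Rintegral do rewrite big_nil; rewrite Rintegral_cst // mul0r big_nil.
under eq_Rintegral do rewrite big_cons.
rewrite RintegralD //; last exact: integrable_Rsum.
by rewrite big_cons IH.
Qed.

End IntegralSum.

Lemma continuous_prod (T : topologicalType) (R : realType) (I : Type) (s : seq I)
    (g : I -> T -> R) :
  (forall i, continuous (g i)) -> continuous (fun x => \prod_(i <- s) g i x).
Proof.
move=> g_cont; elim: s => [|i s IH].
  by under eq_fun do rewrite big_nil; exact: cst_continuous.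
under eq_fun do rewrite big_cons.
by move=> x; apply: continuousM; [exact: g_cont | exact: IH].
Qed.

Lemma continuous_sum (T : topologicalType) (R : realType) (I : Type) (s : seq I)
    (g : I -> T -> R) :
  (forall i, continuous (g i)) -> continuous (fun x => \sum_(i <- s) g i x).
Proof.
move=> g_cont; elim: s => [|i s IH].
  by under eq_fun do rewrite big_nil; exact: cst_continuous.
under eq_fun do rewrite big_cons.
by move=> x; apply: (@continuousD _ _ _ (g i)); [exact: g_cont | exact: IH].
Qed.

Section BorelH.
Variables (R : realType) (H : normedModType R).

Lemma open_measurable_borelH (A : set H) : open A -> measurable (A : set (borelH H)).
Proof. exact: sub_sigma_algebra. Qed.

Lemma compact_measurable_borelH (F : set H) : compact F -> measurable (F : set (borelH H)).
Proof.
move=> /(compact_closed (@norm_hausdorff _ _)) /closed_openC.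
by move=> /open_measurable_borelH /measurableC; rewrite setCK.
Qed.

Lemma continuous_measurable_borelH (D : set (borelH H)) (f : H -> R) :
  measurable D -> continuous f -> measurable_fun D (f : borelH H -> R).
Proof.
move=> mD /continuousP f_cont; apply: (measurability _ (RGenOpens.measurableE R)).
move=> _ [_ [a [b ->] <-]]; apply: measurableI => //.
by apply: open_measurable_borelH; apply: f_cont; exact: interval_open.
Qed.

Lemma continuous_compact_integrable (mu : {measure set (borelH H) -> \bar R}) (F : set H)
    (f : H -> R) :
  compact F -> (mu F < +oo)%E -> continuous f -> mu.-integrable F (EFin \o f).
Proof.
move=> cF muF_fin f_cont; have mF := compact_measurable_borelH cF.
have [M [_ fM]] := compact_bounded (continuous_compact (continuous_subspaceT f_cont) cF).
have f_le f0 : F f0 -> `|f f0| <= `|M| + 1.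
  by move=> Ff0; apply: fM; [rewrite ltr_pwDr // ler_norm | exists f0].
have mf : measurable_fun (F : set (borelH H)) (EFin \o f : borelH H -> \bar R).
  by apply/measurable_EFinP; exact: continuous_measurable_borelH.
apply/integrableP; split => //.
apply: le_lt_trans (integral_le_bound (`|M| + 1)%:E mF _ _ _) _.
- exact: mf.
- by rewrite lee_fin addr_ge0.
- by apply: aeW => x Fx; rewrite /= lee_fin f_le.
by rewrite lte_mul_pinfty // lee_fin addr_ge0.
Qed.

End BorelH.

Lemma sqr_le_mul_of_quadratic_ge0 (R : realFieldType) (a b c : R) :
  0 <= a -> (forall t, 0 <= c + 2 * t * b + t ^+ 2 * a) -> b ^+ 2 <= a * c.
Proof.
move=> a_ge0 quad_ge0; have [a_gt0|a_le0] := ltP 0 a.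
  have := quad_ge0 (- b / a).
  rewrite (_ : _ + _ = c - b ^+ 2 / a); last by field; rewrite gt_eqF.
  by rewrite subr_ge0 ler_pdivrMr // mulrC.
have a0 : a = 0 by apply/eqP; rewrite eq_le a_le0 a_ge0.
subst a; have [->|b_neq0] := eqVneq b 0; first by rewrite expr0n mul0r.
have := quad_ge0 (- (c + 1) / (2 * b)).
by rewrite (_ : 2 * _ * b = - (c + 1)) ?mulr0; [lra | field].
Qed.

Section MomentForm.
Variables (R : realType) (H : normedModType R) (inner : H -> H -> R) (e : nat -> H).
Variables (d n : nat) (F : set H) (mu : probability (borelH H) R).
Hypotheses (inner_norm : inner_product_of_norm inner) (cF : compact F).
Local Notation N := (Nbasis d n).
Local Notation v := (vdn inner e d n).
Local Notation Mx := (moment_matrix inner e d n mu F).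

Let mF : measurable (F : set (borelH H)) := compact_measurable_borelH cF.

Let muF_fin : (mu F < +oo)%E.
Proof. exact: le_lt_trans (probability_le1 mu mF) (ltry _). Qed.

Let continuous_integrable (f : H -> R) : continuous f -> mu.-integrable F (EFin \o f).
Proof. exact: continuous_compact_integrable cF muF_fin. Qed.

Lemma continuous_vdn i : continuous (fun f => v f i 0).
Proof.
under eq_fun do rewrite mxE.
apply: continuous_prod => j.
rewrite (_ : (fun f => _) = (fun r : R => r ^+ (val (enum_val i) j)) \o inner^~ (e j)) //.
by move=> f; apply: continuous_comp; [exact: continuous_innerl | exact: exprn_continuous].
Qed.

Definition moment_form (x y : 'cV[R]_N) : R := (x^T *m Mx *m y) 0 0.

Definition coef_poly (x : 'cV[R]_N) (f : H) : R := (x^T *m v f) 0 0.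

Lemma coef_polyE x f : coef_poly x f = \sum_i x i 0 * v f i 0.
Proof. by rewrite /coef_poly mxE; apply: eq_bigr => i _; rewrite mxE. Qed.

Lemma continuous_coef_poly x : continuous (coef_poly x).
Proof.
rewrite (_ : coef_poly x = fun f => \sum_i x i 0 * v f i 0); last first.
  by apply: funext => f; exact: coef_polyE.
apply: continuous_sum => i f.
by apply: continuousM; [exact: cst_continuous | exact: continuous_vdn].
Qed.

Lemma moment_formE x y :
  moment_form x y = Rintegral mu F (fun f => coef_poly x f * coef_poly y f).
Proof.
have t_int i j : mu.-integrable F
    (EFin \o (fun f => x i 0 * y j 0 * (v f i 0 * v f j 0))).
  apply: continuous_integrable => f.
  apply: (@continuousM _ H); first exact: cst_continuous.
  by apply: (@continuousM _ H); exact: continuous_vdn.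
have -> : (fun f => coef_poly x f * coef_poly y f) =
    fun f => \sum_j \sum_i x i 0 * y j 0 * (v f i 0 * v f j 0).
  apply: funext => f; rewrite !coef_polyE mulr_sumr; apply: eq_bigr => j _.
  by rewrite mulr_suml; apply: eq_bigr => i _; ring.
rewrite Rintegral_sum //; last by move=> j; exact: integrable_Rsum.
rewrite /moment_form mxE; apply: eq_bigr => j _.
rewrite Rintegral_sum // mxE mulr_suml; apply: eq_bigr => i _.
rewrite mxE RintegralZl //; last first.
  by apply: continuous_integrable => f; apply: (@continuousM _ H); exact: continuous_vdn.
by rewrite !mxE; ring.
Qed.

Lemma moment_formC x y : moment_form x y = moment_form y x.
Proof. by rewrite !moment_formE; apply: eq_Rintegral => f _; rewrite mulrC. Qed.

Lemma moment_form_ge0 x : 0 <= moment_form x x.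
Proof. by rewrite moment_formE; apply: Rintegral_ge0 => f _; exact: sqr_ge0. Qed.

Lemma moment_formDl x y z : moment_form (x + y) z = moment_form x z + moment_form y z.
Proof. by rewrite /moment_form linearD /= !mulmxDl mxE. Qed.

Lemma moment_formZl a x z : moment_form (a *: x) z = a * moment_form x z.
Proof. by rewrite /moment_form linearZ /= -!scalemxAl mxE. Qed.

Lemma moment_form_cauchy_schwarz x y :
  moment_form x y ^+ 2 <= moment_form x x * moment_form y y.
Proof.
rewrite mulrC; apply: sqr_le_mul_of_quadratic_ge0 (moment_form_ge0 y) _ => t.
rewrite (_ : _ + _ = moment_form (x + t *: y) (x + t *: y)); first exact: moment_form_ge0.
rewrite moment_formDl moment_formZl !(moment_formC _ (x + t *: y)).
by rewrite !moment_formDl !moment_formZl (moment_formC y x); ring.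
Qed.

Lemma sqr_le_christoffel_darboux (q : H -> R) (h : H) : Mx \in unitmx ->
  is_poly inner e d n d q -> (forall f, F f -> q f ^+ 2 <= 1) ->
  q h ^+ 2 <= christoffel_darboux inner e d n mu F h.
Proof.
move=> Mx_unit [c [_ qE]] q_le1.
pose cv : 'cV[R]_N := \col_i c (enum_val i).
have q_coef f : q f = coef_poly cv f.
  rewrite qE coef_polyE; under [RHS]eq_bigr do rewrite !mxE.
  exact: big_enum_val.
pose w := invmx Mx *m v h.
have Mw : Mx *m w = v h by rewrite mulKVmx.
have pE : christoffel_darboux inner e d n mu F h = moment_form w w.
  rewrite /christoffel_darboux /moment_form -!mulmxA Mw -/w.
  by rewrite !mxE; apply: eq_bigr => i _; rewrite !mxE mulrC.
have qhE : q h = moment_form cv w by rewrite q_coef /coef_poly /moment_form -mulmxA Mw.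
have cv_le1 : moment_form cv cv <= 1.
  have int_cst1 : mu.-integrable F (EFin \o cst (1 : R)).
    by apply: continuous_integrable; exact: cst_continuous.
  rewrite moment_formE; apply: (@le_trans _ _ (Rintegral mu F (cst 1))).
    apply: le_Rintegral => // [|f Ff]; last by rewrite -!q_coef -expr2 q_le1.
    apply: continuous_integrable => f.
    by apply: (@continuousM _ H); exact: continuous_coef_poly.
  rewrite Rintegral_cst // mul1r -lee_fin fineK ?probability_le1 //.
  exact: fin_num_measure.
rewrite qhE pE; apply: le_trans (moment_form_cauchy_schwarz cv w) _.
by rewrite ler_piMl ?moment_form_ge0.
Qed.

Lemma christoffel_darboux_ge1 (h : H) : Mx \in unitmx ->
  1 <= christoffel_darboux inner e d n mu F h.
Proof.
move=> Mx_unit; have := sqr_le_christoffel_darboux (q := fun=> 1) h Mx_unit.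
by rewrite expr1n; apply => //; apply: is_poly_leq (is_poly_cst _).
Qed.

Lemma poly_eq_of_eq_on (q : H -> R) (c : R) (h : H) : Mx \in unitmx ->
  is_poly inner e d n d q -> (forall f, F f -> q f = c) -> q h = c.
Proof.
move=> Mx_unit q_poly q_eq; apply: contra_eq (christoffel_darboux_ge1 h Mx_unit).
set p := christoffel_darboux _ _ _ _ _ _ h => qh_neq.
(* Any multiple of q - c is bounded by 1 on F, so q h <> c would make p unbounded. *)
pose r f := (1 + p) / (q h - c) * (q f + - c).
have r_poly : is_poly inner e d n d r.
  by apply: is_polyZ; apply: is_polyD => //; apply: is_poly_leq (is_poly_cst _).
have r_le1 f : F f -> r f ^+ 2 <= 1 by move=> Ff; rewrite /r (q_eq f Ff) subrr mulr0 expr0n.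
have := sqr_le_christoffel_darboux h Mx_unit r_poly r_le1.
by rewrite /r divfK ?subr_eq0 // -/p => sqr_le_p; apply/negP => _; nra.
Qed.

Lemma chebyshev_le_christoffel_darboux (g : H -> R) (h : H) (m M : R) (k : nat) :
  Mx \in unitmx -> is_poly inner e d n 2 g -> g h = 0 -> 0 < m < M ->
  (forall f, F f -> m ^+ 2 <= g f <= M ^+ 2) -> (2 * k <= d)%N ->
  ((M + m) / (M - m)) ^+ (2 * k) / 4 <= christoffel_darboux inner e d n mu F h.
Proof.
move=> Mx_unit g_poly gh0 /andP[m_gt0 m_lt_M] g_range le_2k_d.
have sqr_gap : 0 < M ^+ 2 - m ^+ 2 by nra.
(* The affine map sending [m^2, M^2] onto [-1, 1]. *)
pose phi f := (M ^+ 2 + m ^+ 2) / (M ^+ 2 - m ^+ 2) + (- 2 / (M ^+ 2 - m ^+ 2)) * g f.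
have phi_poly : is_poly inner e d n 2 phi.
  by apply: is_polyD; [by apply: is_poly_leq (is_poly_cst _) | exact: is_polyZ].
have phi_range f : F f -> -1 <= phi f <= 1.
  move=> /g_range /andP[g_ge g_le].
  rewrite /phi (_ : _ + _ = (M ^+ 2 + m ^+ 2 - 2 * g f) / (M ^+ 2 - m ^+ 2)).
    by rewrite ler_pdivlMr // ler_pdivrMr //; apply/andP; split; lra.
  by field; rewrite gt_eqF.
pose rho := (M + m) / (M - m).
have rho_gt0 : 0 < rho by apply: divr_gt0; lra.
have phi_h : phi h = (rho + rho^-1) / 2.
  rewrite /phi gh0 mulr0 addr0 /rho invf_div; field.
  by rewrite !gt_eqF //; lra.
have := sqr_le_christoffel_darboux (q := fun f => chebT k (phi f)) h Mx_unit
  (is_poly_leq le_2k_d (is_poly_chebT phi_poly le_2k_d))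
  (fun f Ff => sqr_chebT_le1 k (phi_range f Ff)).
apply: le_trans; rewrite /= phi_h chebT_mid ?divff ?gt_eqF // mulnC exprM.
have : 0 <= rho^-1 ^+ k by rewrite exprn_ge0 // invr_ge0 ltW.
have : 0 <= rho ^+ k by rewrite exprn_ge0 // ltW.
by move: (rho ^+ k) (rho^-1 ^+ k) => x y; nra.
Qed.

End MomentForm.

Lemma probability_setC0_nonempty d (T : measurableType d) (R : realType)
    (P : probability T R) (A : set T) : P (~` A) = 0%E -> exists x, A x.
Proof.
apply: contraPP => noA; rewrite (_ : ~` A = setT); last first.
  by apply/seteqP; split => // x _ Ax; apply: noA; exists x.
by rewrite probability_setT; apply/eqP; rewrite eqe oner_eq0.
Qed.

Lemma le_diam (R : realType) (H : normedModType R) (F : set H) f1 f2 :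
  compact F -> F f1 -> F f2 -> `|f1 - f2| <= diam F.
Proof.
move=> cF Ff1 Ff2; apply: sup_upper_bound; last by exists f1 => //; exists f2.
split; first by exists `|f1 - f2|; exists f1 => //; exists f2.
have [M [_ FM]] := compact_bounded cF.
have le_M f : F f -> `|f| <= `|M| + 1 by move=> Ff; apply: FM; rewrite ?ltr_pwDr ?ler_norm.
exists ((`|M| + 1) + (`|M| + 1)) => _ [g1 Fg1 [g2 Fg2 <-]].
by rewrite (le_trans (ler_normB _ _)) // lerD // le_M.
Qed.

Section ProjectedDistance.
Variables (R : realType) (H : normedModType R) (inner : H -> H -> R) (e : nat -> H).
Hypothesis inner_norm : inner_product_of_norm inner.
Hypothesis e_orthonormal : forall i j, inner (e i) (e j) = (i == j)%:R.
Variables (d n : nat) (F : set H) (h : H).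
Local Notation P := (proj_n inner e n).

(* m is the infimum of |P (f - h)| over F; the upper bound comes from
   |P (f - f')| <= |f - f'|. *)
Lemma proj_n_dist_range (delta : R) f0 : compact F -> F f0 ->
  (forall f, F f -> delta <= `|P (f - h)|) ->
  exists m, delta <= m /\ forall f, F f -> m <= `|P (f - h)| <= m + diam F.
Proof.
move=> cF Ff0 far; pose S := [set `|P (f - h)| | f in F].
have S_inf : has_inf S by split; [exists `|P (f0 - h)|; exists f0 | exists 0 => _ [f _ <-]].
have inf_le f : F f -> inf S <= `|P (f - h)| by move=> Ff; apply: ge_inf; [case: S_inf | exists f].
exists (inf S); split.
  by apply: lb_le_inf; [exists `|P (f0 - h)|; exists f0 | move=> _ [f Ff <-]; exact: far].
move=> f Ff; rewrite inf_le //=; apply/ler_addgt0Pr => eps eps_gt0.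
have [_ [f' Ff' <-] f'_lt] := inf_adherent eps_gt0 S_inf.
have -> : P (f - h) = P (f - f') + P (f' - h).
  by rewrite !(proj_nB e inner_norm) addrA subrK.
apply: le_trans (ler_normD _ _) _.
have := le_diam cF Ff Ff'; have := proj_n_norm_le inner_norm e_orthonormal n (f - f').
by lra.
Qed.

Lemma is_poly_proj_n_sqr_dist : (2 <= d)%N ->
  is_poly inner e d n 2 (fun f => `|P (f - h)| ^+ 2).
Proof.
move=> d_ge2; apply: is_poly_ext (_ : is_poly inner e d n 2
  (fun f => \sum_(i < n) (inner f (e i) - inner h (e i)) * (inner f (e i) - inner h (e i)))) _.
  apply: is_poly_sum => i; apply: (is_polyM (k := 1) (l := 1)) => //;
  by apply: is_polyD; [exact: is_poly_coord (ltnW d_ge2) | apply: is_poly_leq (is_poly_cst _)].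
move=> f; rewrite proj_n_sqr_norm //; apply: eq_bigr => i _.
by rewrite (innerBl inner_norm) expr2.
Qed.

End ProjectedDistance.

Lemma two_powR_le_ratio (R : realType) (a : R) : 0 <= a < 1 -> 2 `^ a <= (1 + a) / (1 - a).
Proof.
move=> /andP[a_ge0 a_lt1].
have ln2_le1 : ln (2 : R) <= 1.
  by rewrite -ler_expR lnK ?posrE //; apply: le_trans (expR_ge1Dx 1); lra.
have pow_le : 2 `^ a <= expR a.
  rewrite /powR ifF; last by apply/negbTE; rewrite pnatr_eq0.
  by rewrite ler_expR -{2}[a]mulr1 ler_wpM2l.
have exp_le : expR a <= (1 - a)^-1.
  have := expR_ge1Dx (- a); rewrite expRN => le_inv.
  by rewrite -[expR a]invrK lef_pV2 ?posrE ?invr_gt0 ?expR_gt0 ?subr_gt0.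
apply: le_trans pow_le (le_trans exp_le _).
by rewrite -[X in X <= _]mul1r ler_pM2r ?invr_gt0 ?subr_gt0 //; lra.
Qed.

(* The shape 2 * d./2 is the largest even degree available for T_k(phi), phi quadratic. *)
Lemma two_powR_le_pow_half (R : realType) (a a' r : R) (d : nat) :
  0 <= a' <= a -> a <= 1 -> 2 `^ a <= r -> 2 `^ (a' * d%:R - 3) <= r ^+ (2 * d./2) / 4.
Proof.
move=> /andP[a'_ge0 le_a'a] a_le1 le_r.
have le_d : (d%:R : R) <= (2 * d./2)%:R + 1.
  rewrite natr1 ler_nat; have := odd_double_half d; rewrite -mul2n; case: (odd d) => /=; lia.
apply: (@le_trans _ _ (2 `^ (a * (2 * d./2)%:R - 2))).
  apply: ler_powR; first lra.
  have : a' * d%:R <= a * d%:R by rewrite ler_wpM2r.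
  have : a * d%:R <= a * ((2 * d./2)%:R + 1) by rewrite ler_wpM2l //; lra.
  by lra.
rewrite powRD ?pnatr_eq0 ?implybT // powRrM powR_mulrn ?powR_ge0 //.
rewrite powR_invn // (_ : (2 : R) ^+ 2 = 4); last by rewrite expr2; lra.
rewrite ler_wpM2r // lerXn2r ?nnegrE ?powR_ge0 //.
by apply: le_trans le_r; exact: powR_ge0.
Qed.

Lemma two_powR_le1 (R : realType) (delta D : R) (d : nat) : 0 < delta -> 0 <= D ->
  (d <= 1)%N -> 2 `^ (delta / (delta + D) * d%:R - 3) <= 1.
Proof.
move=> delta_gt0 D_ge0 d_le1; rewrite -[leRHS](powRr0 2); apply: ler_powR; first lra.
have : delta / (delta + D) * d%:R <= 1 * 1.
  apply: ler_pM; rewrite ?ler0n ?lern1 //; first by apply: divr_ge0; lra.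
  by rewrite ler_pdivrMr; lra.
by lra.
Qed.

Lemma two_powR_le_chebyshev_ratio (R : realType) (delta m D : R) (d : nat) :
  0 < delta <= m -> 0 < D ->
  2 `^ (delta / (delta + D) * d%:R - 3) <= ((m + D + m) / (m + D - m)) ^+ (2 * d./2) / 4.
Proof.
move=> /andP[delta_gt0 le_delta_m] D_gt0.
have m_gt0 : 0 < m by exact: lt_le_trans delta_gt0 le_delta_m.
apply: (two_powR_le_pow_half (a := m / (m + D))).
- apply/andP; split; first by rewrite divr_ge0 ?ltW ?addr_gt0.
  rewrite ler_pdivrMr ?addr_gt0 // mulrAC ler_pdivlMr ?addr_gt0 //.
  have : delta * D <= m * D by rewrite ler_wpM2r // ltW.
  by lra.
- by rewrite ler_pdivrMr ?addr_gt0 // mul1r lerDl ltW.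
- apply: le_trans (two_powR_le_ratio _) _.
    by rewrite divr_ge0 ?ltW ?addr_gt0 //= ltr_pdivrMr ?addr_gt0 // mul1r ltrDl.
  suff -> : (1 + m / (m + D)) / (1 - m / (m + D)) = (m + D + m) / (m + D - m) by [].
  by field; rewrite addrAC subrr add0r !gt_eqF ?addr_gt0.
Qed.

Theorem lemma5 (R : realType) (H : completeNormedModType R)
  (inner : H -> H -> R) (e : nat -> H)
  (F : set H) (mu : probability (borelH H) R) (d n : nat) :
  inner_product_of_norm inner ->
  complete_orthonormal_system inner e ->
  compact F ->
  mu (~` (F : set (borelH H))) = 0%E ->
  moment_matrix inner e d n mu F \in unitmx ->
  forall (h : H) (delta : R), 0 < delta ->
    (forall f, F f -> delta <= `|proj_n inner e n (f - h)|) ->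
    2 `^ (delta / (delta + diam F) * d%:R - 3) <=
      christoffel_darboux inner e d n mu F h.
Proof.
move=> inner_norm [e_orthonormal _] cF muFC0 Mx_unit h delta delta_gt0 far.
have [f0 Ff0] := probability_setC0_nonempty muFC0.
have [m [le_delta_m m_range]] := proj_n_dist_range inner_norm e_orthonormal cF Ff0 far.
have D_ge0 : 0 <= diam F by have := le_diam cF Ff0 Ff0; rewrite subrr normr0.
set D := diam F in m_range D_ge0 *.
have [d_le1|d_ge2] := leqP d 1.
  apply: le_trans (two_powR_le1 delta_gt0 D_ge0 d_le1) _.
  exact: christoffel_darboux_ge1.
pose g f := `|proj_n inner e n (f - h)| ^+ 2.
have g_poly : is_poly inner e d n 2 g by exact: is_poly_proj_n_sqr_dist.
have gh0 : g h = 0 by rewrite /g (proj_nB e inner_norm) subrr normr0 expr0n.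
have g_range f : F f -> m ^+ 2 <= g f <= (m + D) ^+ 2.
  by move=> /m_range /andP[lo hi]; rewrite /g !ler_sqr ?nnegrE ?lo ?hi //; lra.
have [D_gt0|D_le0] := ltP 0 D; last first.
  suff : g h = m ^+ 2 by rewrite gh0; nra.
  apply: (poly_eq_of_eq_on inner_norm cF h Mx_unit (is_poly_leq d_ge2 g_poly)) => f.
  by move=> /g_range; rewrite (_ : D = 0) ?addr0; lra.
have m_bounds : 0 < m < m + D by apply/andP; split; lra.
have le_2k_d : (2 * d./2 <= d)%N by rewrite -[leqRHS]odd_double_half -mul2n leq_addl.
apply: le_trans (chebyshev_le_christoffel_darboux inner_norm cF Mx_unit g_poly gh0
  m_bounds g_range le_2k_d).
by apply: two_powR_le_chebyshev_ratio D_gt0; apply/andP.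
Qed.
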